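(* Let $b>1$, $\gamma>0$ and $x_0\ge e$ be constants, and let $\zeta$ be a random variable whose tail function satisfies $$T_\zeta(x)=x^{-b}(\ln x)^{\gamma}\qquad\text{for all } x\ge x_0.$$ Then $|\zeta|_p\asymp (b-p)^{-(\gamma+1)/b}$ for $p\in[1,b)$ (i.e. the ratio of the two sides is bounded above and below by positive finite constants on $[1,b)$). Consequently $\zeta$ belongs to the space $G\psi^{b,\gamma+1}$, but $\|\zeta\|G\psi^{b,\gamma}=\infty$, where $\psi^{b,\delta}(p)=(b-p)^{-\delta/b}$, $p\in[1,b)$.
   Context: All random variables are defined on a probability space $(\Omega,F,\mathbf P)$. For $p\ge 1$, $|f|_p=(\mathbf E|f|^p)^{1/p}$. Given a positive continuous function $\psi$ on $[1,b)$, the Grand Lebesgue Space $G\psi$ consists of all random variables $f$ with finite norm $\|f\|G\psi=\sup_{p\in[1,b)}|f|_p/\psi(p)$. The tail function of a random variable $\xi$ is $T_\xi(x)=\max(\mathbf P(\xi\ge x),\mathbf P(\xi\le -x))$, $x\ge0$. *)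

From HB Require Import structures.
From mathcomp Require Import all_boot all_order all_algebra.
From mathcomp Require Import all_classical all_reals all_analysis.
Set Implicit Arguments. Unset Strict Implicit. Unset Printing Implicit Defensive.
Import Order.TTheory GRing.Theory Num.Theory.
Local Open Scope classical_set_scope.
Local Open Scope ring_scope.

Definition pnorm {d} {T : measurableType d} {R : realType}
  (P : probability T R) (f : T -> R) (p : R) : \bar R :=
  Lnorm P p%:E (EFin \o f).

Definition tailfun {d} {T : measurableType d} {R : realType}
  (P : probability T R) (xi : T -> R) (x : R) : \bar R :=
  maxe (P [set w | x <= xi w]) (P [set w | xi w <= - x]).

Definition psi {R : realType} (b delta p : R) : R :=
  (b - p) `^ (- (delta / b)).

Definition GLSnorm {d} {T : measurableType d} {R : realType}
  (P : probability T R) (psi : R -> R) (b : R) (f : T -> R) : \bar R :=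
  ereal_sup [set (pnorm P f p * ((psi p)^-1)%:E)%E | p in `[1, b[%classic].

From HB Require Import structures.
From mathcomp Require Import all_boot all_order all_algebra.
From mathcomp Require Import all_classical all_reals all_analysis.
From mathcomp Require Import ring lra measurable_realfun.
Import Order.TTheory GRing.Theory Num.Theory.
Local Open Scope classical_set_scope.
Local Open Scope ring_scope.

(* Let L = ln x0 and s = b - p.  For u >= L the two-sided tail gives
   phi u <= P (|zeta| >= e^u) <= 2 phi u with phi u = e^(-b u) u^gamma.
   Slicing |zeta|^p along the levels e^(L + k) bounds E |zeta|^p by
   x0^p + sum_k e^(p (L + k + 1)) 2 phi (L + k); as u^gamma <= (2 gamma / s)^gamma e^(s u / 2),
   the k-th term is O(s^-gamma e^(-s k / 2)) and the sum is O(s^-(gamma + 1)).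
   Conversely the N ~ 1/s layers between the levels L + N + k, k <= N, satisfy 1 <= s u = O(1),
   so each contributes at least a constant times s^-gamma, and E |zeta|^p >= const s^-(gamma + 1).
   Taking p-th roots costs only a bounded factor, because s^(1/p - 1/b) = s^(s / (p b)) stays
   away from 0 and +oo; hence |zeta|_p is comparable to psi^{b,gamma+1}(p).  Finally
   psi^{b,gamma+1} / psi^{b,gamma} = s^(-1/b) is unbounded as p -> b. *)

Section real_estimates.
Variable R : realType.
Implicit Types (a b c g p s t u x e delta A B L M : R).

Lemma powRE a x : 0 < a -> a `^ x = expR (x * ln a).
Proof. by move=> a0; rewrite /powR gt_eqF. Qed.

Lemma mulr_ln_le g t : 0 < g -> 0 < t -> g * ln t <= g * ln (2 * g) + t / 2.
Proof.
move=> g0 t0; have g2 : 0 < 2 * g by rewrite mulr_gt0.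
have := ln_sublinear (divr_gt0 t0 g2).
rewrite ln_div ?posrE// => /ltW /(ler_wpM2l (ltW g0)).
have -> : g * (t / (2 * g)) = t / 2 by field; rewrite gt_eqF.
lra.
Qed.

Lemma sum_expR_geometric_le c n : 0 < c ->
  \sum_(0 <= k < n) expR (- (c * k%:R)) <= (1 + c) / c.
Proof.
move=> c0; have q1 : expR (- c) < 1 by rewrite expR_lt1 oppr_lt0.
have nq1 : `|expR (- c)| < 1 by rewrite ger0_norm ?expR_ge0.
have -> : \sum_(0 <= k < n) expR (- (c * k%:R)) = series (geometric 1 (expR (- c))) n.
  by apply: eq_bigr => k _; rewrite /= mul1r -expRM_natr mulNr.
apply: (le_trans (geometric_le_lim _ ler01 (expR_gt0 _) nq1)).
have : expR (- c) <= (1 + c)^-1.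
  by rewrite expRN lef_pV2 ?posrE ?expR_gt0 ?addr_gt0 ?expR_ge1Dx.
rewrite mul1r -[(1 + c) / c]invf_div lef_pV2 ?posrE ?divr_gt0 ?subr_gt0 ?addr_gt0//.
have -> : c / (1 + c) = 1 - (1 + c)^-1 by field; lra.
lra.
Qed.

Lemma sum_increments_le (a c : nat -> R) t n :
  (forall k, a k <= a k.+1) -> 0 <= a 0%N -> 0 <= t ->
  (forall k, c k = 0 \/ (c k = 1 /\ a k.+1 <= t)) ->
  \sum_(0 <= k < n) (a k.+1 - a k) * c k <= t.
Proof.
move=> a_nd a0 t0 hc.
suff : \sum_(0 <= k < n) (a k.+1 - a k) * c k <= a n - a 0%N /\
  (\sum_(0 <= k < n) (a k.+1 - a k) * c k <= t - a 0%N \/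
   \sum_(0 <= k < n) (a k.+1 - a k) * c k = 0).
  by case=> _ [|->]; lra.
elim: n => [|n [ih1 ih2]]; first by rewrite big_geq//; lra.
have := a_nd n; rewrite big_nat_recr//=.
by case: (hc n) => [->|[-> ht]] ann; [rewrite mulr0 addr0; split|]; lra.
Qed.

Lemma mul_ln_bounds s e B : 0 < s -> s <= B -> 0 <= e -> e <= s -> e <= 1 ->
  -1 <= ln s * e <= `|ln B|.
Proof.
move=> s0 sB e0 es e1; have [ls|ls] := leP (ln s) 0.
  (* s ln (1/s) <= 1 since ln x < x *)
  have : ln s^-1 < s^-1 by apply: ln_sublinear; rewrite invr_gt0.
  rewrite lnV ?posrE// => /ltW /(ler_wpM2r (ltW s0)); rewrite mulVf ?gt_eqF//.
  have : ln s * s <= ln s * e by rewrite ler_wnM2l.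
  have : ln s * e <= 0 by rewrite mulr_le0_ge0.
  have := normr_ge0 (ln B); rewrite !mulNr; lra.
have : ln s * e <= ln s by apply: ler_piMr => //; exact: ltW.
have : ln s <= ln B by rewrite ler_ln ?posrE ?(lt_le_trans s0).
have : 0 <= ln s * e by apply: mulr_ge0 => //; exact: ltW.
have := ler_norm (ln B); lra.
Qed.

Lemma powR_inv_comparable b delta A B : 1 < b -> 0 <= delta -> 0 < A -> 0 < B ->
  exists c1 c2, [/\ 0 < c1, 0 < c2 & forall p r, 1 <= p -> p < b ->
    A * (b - p) `^ (- delta) <= r -> r <= B * (b - p) `^ (- delta) ->
    c1 * psi b delta p <= r `^ p^-1 <= c2 * psi b delta p].
Proof.
move=> b1 d0 A0 B0.
exists (expR (- `|ln A| - delta * `|ln (b - 1)|)), (expR (`|ln B| + delta)).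
split; [exact: expR_gt0|exact: expR_gt0|move=> p r p1 pb hA hB].
have s0 : 0 < b - p by rewrite subr_gt0.
have r0 : 0 < r by apply: lt_le_trans hA; rewrite mulr_gt0 ?powR_gt0.
move: hA hB; rewrite /psi !powRE// -!expRD !ler_expR; set l := ln (b - p) => hA hB.
have {}hA : ln A - delta * l <= ln r.
  by move: hA; rewrite -ler_ln ?posrE ?mulr_gt0 ?expR_gt0// lnM ?posrE ?expR_gt0// expRK mulNr.
have {}hB : ln r <= ln B - delta * l.
  by move: hB; rewrite -ler_ln ?posrE ?mulr_gt0 ?expR_gt0// lnM ?posrE ?expR_gt0// expRK mulNr.
have p0 : 0 < p by apply: lt_le_trans p1.
have b0 : 0 < b by apply: lt_trans b1.
have q0 : 0 < p^-1 by rewrite invr_gt0.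
have q1 : p^-1 <= 1 by rewrite invf_le1.
have bi0 : 0 < b^-1 by rewrite invr_gt0.
have bi1 : b^-1 <= 1 by rewrite invf_le1 // ltW.
(* 1/p - 1/b = (b - p)/(p b) lies in [0, min (b - p) 1] *)
have eE : p^-1 - b^-1 = (b - p) * (p^-1 * b^-1).
  by field; rewrite !gt_eqF.
have /andP[le1 le2] : - 1 <= l * (p^-1 - b^-1) <= `|ln (b - 1)|.
  have qb1 : p^-1 * b^-1 <= 1 by apply: mulr_ile1 => //; apply: ltW.
  apply: mul_ln_bounds => //; first by rewrite lerB.
  - by rewrite eE; apply/ltW/mulr_gt0 => //; exact: mulr_gt0.
  - by rewrite eE; apply: ler_piMr => //; exact: ltW.
  - lra.
have qx x : - `|x| <= p^-1 * x <= `|x|.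
  by rewrite -ler_norml normrM gtr0_norm//; apply: ler_piMl.
have /andP[qA _] := qx (ln A); have /andP[_ qB] := qx (ln B).
have := ler_wpM2l (ltW q0) hA; have := ler_wpM2l (ltW q0) hB.
have := ler_wpM2l d0 le1; have := ler_wpM2l d0 le2.
rewrite /l; lra.
Qed.

Lemma powR_oppD1 s g : 0 < s -> s `^ (- (g + 1)) = s `^ (- g) / s.
Proof.
move=> s0; rewrite opprD powRD ?powR_inv1 ?ltW//.
by apply/implyP => _; rewrite gt_eqF.
Qed.

Lemma level_term_le b g p u : 0 < g -> 0 < u -> 0 <= p -> p < b ->
  expR (p * (u + 1)) * (2 * (expR (- b * u) * u `^ g)) <=
  2 * expR b * (2 * g) `^ g * (b - p) `^ (- g) * expR (- ((b - p) / 2 * u)).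
Proof.
move=> g0 u0 p0 pb; have s0 : 0 < b - p by rewrite subr_gt0.
have := mulr_ln_le _ _ g0 (mulr_gt0 s0 u0); rewrite [ln (_ * u)]lnM ?posrE// => hln.
have -> : expR (p * (u + 1)) * (2 * (expR (- b * u) * u `^ g)) =
    2 * expR (p * (u + 1) + - b * u + g * ln u) by rewrite powRE// !expRD; ring.
have -> : 2 * expR b * (2 * g) `^ g * (b - p) `^ (- g) * expR (- ((b - p) / 2 * u)) =
    2 * expR (b + g * ln (2 * g) + - g * ln (b - p) + - ((b - p) / 2 * u)).
  by rewrite !powRE ?mulr_gt0// !expRD; ring.
by rewrite ler_pM2l// ler_expR; lra.
Qed.

Lemma sum_level_terms_le b g p L n : 0 < g -> 0 < L -> 0 <= p -> p < b ->
  \sum_(0 <= k < n) expR (p * (L + k%:R + 1)) *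
                     (2 * (expR (- b * (L + k%:R)) * (L + k%:R) `^ g)) <=
  2 * expR b * (2 * g) `^ g * (2 + b) * (b - p) `^ (- (g + 1)).
Proof.
move=> g0 L0 p0 pb; have s0 : 0 < b - p by rewrite subr_gt0.
set C := 2 * expR b * (2 * g) `^ g * (b - p) `^ (- g).
have C0 : 0 <= C by rewrite !mulr_ge0 ?expR_ge0 ?powR_ge0.
apply: (@le_trans _ _ (C * \sum_(0 <= k < n) expR (- ((b - p) / 2 * k%:R)))).
  rewrite mulr_sumr; apply: ler_sum => k _.
  apply: (le_trans (level_term_le _ _ _ _ g0 _ p0 pb)); first exact: ltr_wpDr.
  rewrite ler_wpM2l// ler_expR lerN2; apply: ler_wpM2l.
    by rewrite divr_ge0 ?ltW.
  by rewrite lerDr; exact: ltW.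
have s2 : 0 < (b - p) / 2 by rewrite divr_gt0.
apply: (le_trans (ler_wpM2l C0 (sum_expR_geometric_le _ n s2))).
rewrite powR_oppD1// /C -!mulrA !ler_pM2l ?expR_gt0 ?powR_gt0 ?mulr_gt0//.
have -> : (1 + (b - p) / 2) / ((b - p) / 2) = (2 + (b - p)) / (b - p).
  by field; rewrite gt_eqF.
rewrite [X in _ <= X]mulrCA ler_pM2l ?powR_gt0// ler_pM2r ?invr_gt0//; lra.
Qed.

Lemma level_term_ge b g p u M : 0 <= g -> 1 <= p -> p < b ->
  1 <= (b - p) * u -> (b - p) * u <= M ->
  (1 - expR (-1)) * expR (- M) * (b - p) `^ (- g) <=
  (expR (p * u) - expR (p * (u - 1))) * (expR (- b * u) * u `^ g).
Proof.
move=> g0 p1 pb su1 suM; have s0 : 0 < b - p by rewrite subr_gt0.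
have u0 : 0 < u by rewrite -(pmulr_rgt0 _ s0) (lt_le_trans ltr01).
have -> : (expR (p * u) - expR (p * (u - 1))) * (expR (- b * u) * u `^ g) =
    (1 - expR (- p)) * (expR (p * u + - b * u) * u `^ g).
  by rewrite mulrDr mulrN1 !expRD; ring.
rewrite -mulrA; apply: ler_pM.
- by rewrite subr_ge0 expR_le1 lerN10.
- by rewrite mulr_ge0 ?expR_ge0 ?powR_ge0.
- by rewrite lerD2l lerN2 ler_expR lerN2.
apply: ler_pM; rewrite ?expR_ge0 ?powR_ge0//.
  by rewrite ler_expR; lra.
rewrite powRN -div1r ler_pdivrMr ?powR_gt0// mulrC -(powRM _ (ltW s0) (ltW u0)).
have : 1 `^ g <= ((b - p) * u) `^ g.
  by apply: ge0_ler_powR => //; rewrite nnegrE ?ler01// ltW// mulr_gt0.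
by rewrite powR1.
Qed.

Lemma psiD1 b delta p : p < b ->
  psi b (delta + 1) p = psi b delta p * (b - p) `^ (- b^-1).
Proof.
move=> pb; rewrite /psi mulrDl mul1r opprD powRD//.
by apply/implyP => _; rewrite gt_eqF// subr_gt0.
Qed.

Lemma sub_powR_unbounded b c A : 1 < b -> 0 < c -> 0 < A ->
  exists2 p, 1 <= p < b & A <= c * (b - p) `^ (- b^-1).
Proof.
move=> b1 c0 A0; have b0 : 0 < b by apply: lt_trans b1.
have b10 : 0 < b - 1 by rewrite subr_gt0.
set D := c * (b - 1) `^ (- b^-1).
have D0 : 0 < D by rewrite mulr_gt0 ?powR_gt0.
(* p := b - (b - 1) e^(-b K) gives c (b - p)^(-1/b) = D e^K *)
set K := `|ln (D^-1 * A)|.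
have eK : expR (- (b * K)) <= 1 by rewrite expR_le1 oppr_le0 mulr_ge0 ?normr_ge0// ltW.
exists (b - (b - 1) * expR (- (b * K))).
  have := ler_piMr (ltW b10) eK; have := mulr_gt0 b10 (expR_gt0 (- (b * K))).
  by move=> ? ?; apply/andP; split; lra.
rewrite opprB addrC subrK (powRM _ (ltW b10) (expR_ge0 _)) -expRM mulrA -/D.
rewrite mulrNN [b * K / b]mulrAC mulfV ?gt_eqF// mul1r -ler_pdivrMl//.
have -> : D^-1 * A = expR (ln (D^-1 * A)) by rewrite lnK// posrE mulr_gt0 ?invr_gt0.
by rewrite ler_expR ler_norm.
Qed.
End real_estimates.

Lemma integral_scaled_indic d (T : measurableType d) (R : realType)
    (mu : {measure set T -> \bar R}) (c : R) (A : set T) :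
  0 <= c -> measurable A -> (\int[mu]_w (c * \1_A w)%:E = c%:E * mu A)%E.
Proof.
move=> c0 mA; rewrite (integralZl_indic _ (fun=> A))// ?integral_indic ?setIT//.
by move=> /lt_le_trans/(_ c0); rewrite ltxx.
Qed.

Section grand_lebesgue_norm.
Context {d} {T : measurableType d} {R : realType} (P : probability T R).
Implicit Types (f : T -> R) (b delta p c : R).

Lemma pnormE f p :
  pnorm P f p = ((\int[P]_w (`|f w| `^ p)%:E) `^ p^-1)%E.
Proof. by rewrite /pnorm Lnorm.unlock. Qed.

Lemma GLSnorm_lt_pinfty f b delta c :
  (forall p, 1 <= p -> p < b -> (pnorm P f p <= (c * psi b delta p)%:E)%E) ->
  (GLSnorm P (psi b delta) b f < +oo)%E.
Proof.
move=> fc; apply: (@le_lt_trans _ _ c%:E); last exact: ltey.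
apply: ge_ereal_sup => _ [p + <-]; rewrite /= in_itv /= => /andP[p1 pb].
have psi0 : 0 < psi b delta p by rewrite powR_gt0// subr_gt0.
apply: (le_trans (lee_wpmul2r _ (fc p p1 pb))); first by rewrite lee_fin invr_ge0 ltW.
by rewrite -EFinM mulrK ?unitf_gt0.
Qed.

Lemma GLSnorm_eq_pinfty f b delta c : 1 < b -> 0 < c ->
  (forall p, 1 <= p -> p < b -> ((c * psi b (delta + 1) p)%:E <= pnorm P f p)%E) ->
  GLSnorm P (psi b delta) b f = +oo%E.
Proof.
move=> b1 c0 cf; apply/eqyP => A A0.
have [p /andP[p1 pb] hA] := @sub_powR_unbounded R b c A b1 c0 A0.
have psi0 : 0 < psi b delta p by rewrite powR_gt0// subr_gt0.
apply: (le_trans _ (ereal_sup_ubound _)); last first.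
  by exists p => //=; rewrite in_itv /= p1 pb.
apply: le_trans (lee_wpmul2r _ (cf p p1 pb)); last by rewrite lee_fin invr_ge0 ltW.
by rewrite -EFinM lee_fin psiD1// mulrCA mulrAC mulfV ?gt_eqF// mul1r.
Qed.

End grand_lebesgue_norm.

Section tail_moments.
Context d (T : measurableType d) (R : realType) (P : probability T R)
  (zeta : {RV P >-> R}) (b gamma x0 : R).
Hypotheses (b1 : 1 < b) (gamma0 : 0 < gamma) (x0_ge_e : expR 1 <= x0)
  (tailE : forall x, x0 <= x ->
     tailfun P zeta x = (x `^ (- b) * ln x `^ gamma)%:E).

Implicit Types (p u : R) (w : T).

Let L := ln x0.

Let x0_ge1 : 1 <= x0.
Proof. by apply: le_trans x0_ge_e; have := expR_ge1Dx (1 : R); lra. Qed.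

Let x0_gt0 : 0 < x0. Proof. exact: lt_le_trans ltr01 x0_ge1. Qed.

Let L_ge1 : 1 <= L.
Proof. by rewrite -(expRK 1) ler_ln ?posrE ?expR_gt0. Qed.

Let x0E : x0 = expR L. Proof. by rewrite lnK ?posrE. Qed.

Definition level u := [set w | expR u <= `|zeta w|].

Let measurable_abs_zeta : measurable_fun setT (fun w => `|zeta w|).
Proof. by apply: measurableT_comp; [exact: normr_measurable|exact: measurable_funPT]. Qed.

Lemma measurable_level u : measurable (level u).
Proof.
by rewrite -[level u]setTI; apply: measurable_fun_le => //; exact: measurable_cst.
Qed.

Lemma measurable_abs_powR p : measurable_fun setT (fun w => (`|zeta w| `^ p)%:E).
Proof. exact/measurable_EFinP/(measurableT_comp (measurable_powR p)). Qed.

Lemma level_prob_bounds u : L <= u ->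
  ((expR (- b * u) * u `^ gamma)%:E <= P (level u))%E /\
  (P (level u) <= (2 * (expR (- b * u) * u `^ gamma))%:E)%E.
Proof.
move=> Lu; have := @tailE (expR u); rewrite x0E ler_expR => /(_ Lu).
rewrite /tailfun -expRM expRK [u * _]mulrC => ht.
have mzeta := measurable_funPT zeta.
have mge : measurable [set w | expR u <= zeta w].
  by rewrite -[X in measurable X]setTI; apply: measurable_fun_le => //; exact: measurable_cst.
have mle : measurable [set w | zeta w <= - expR u].
  by rewrite -[X in measurable X]setTI; apply: measurable_fun_le => //; exact: measurable_cst.
split.
  rewrite -ht ge_max; apply/andP; split; apply: le_measure; rewrite ?inE//; try exact: measurable_level.
    by move=> w /= h; rewrite /level /= (le_trans h)// ler_norm.
  by move=> w /= h; rewrite /level /= ler_normr lerNr h orbT.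
have sub : level u `<=` [set w | expR u <= zeta w] `|` [set w | zeta w <= - expR u].
  move=> w; rewrite /level /=; case: (lerP 0 (zeta w)) => h.
    by rewrite ger0_norm// => ?; left.
  by rewrite ltr0_norm// => ?; right; rewrite lerNr.
apply: (le_trans (le_measure _ _ _ sub)); rewrite ?inE//; first exact: measurable_level.
  exact: measurableU.
apply: (le_trans (measureU2 _ mge mle)); rewrite mulr_natl mulr2n EFinD -ht.
by apply: leeD; rewrite le_max lexx ?orbT.
Qed.

Lemma abs_powR_le_levels p w : 0 <= p ->
  ((`|zeta w| `^ p)%:E <= (x0 `^ p)%:E +
    \sum_(k <oo) (expR (p * (L + k%:R + 1)) * \1_(level (L + k%:R)) w)%:E)%E.
Proof.
move=> p0.
have t0 k : (0 <= (expR (p * (L + k%:R + 1)) * \1_(level (L + k%:R)) w)%:E)%E.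
  by rewrite lee_fin mulr_ge0 ?expR_ge0.
have [zx0|x0z] := ltP `|zeta w| x0.
  apply: (le_trans _ (leeDl _ (nneseries_ge0 _))) => //.
  by rewrite lee_fin ge0_ler_powR ?nnegrE ?normr_ge0// ltW.
have z0 : 0 < `|zeta w| by apply: lt_le_trans x0z.
(* |zeta w| lies in [e^(L+k), e^(L+k+1)) for k = floor (ln |zeta w| - L) *)
set u := ln `|zeta w|.
have Lu : L <= u by rewrite ler_ln ?posrE.
set k := Num.truncn (u - L).
have hk1 : k%:R <= u - L by rewrite truncn_le; lra.
have hk2 : u - L < k%:R + 1 by rewrite natr1; apply: truncnS_gt.
apply: (le_trans _ (leeDr _ _)); last by rewrite lee_fin powR_ge0.
apply: (le_trans _ (nneseries_lim_ge k.+1 _)); last by move=> *; exact: t0.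
rewrite big_nat_recr//=; apply: (le_trans _ (leeDr _ _)); last exact: sume_ge0.
have hw : w \in level (L + k%:R).
  by rewrite inE /level /= -(lnK z0) ler_expR -/u; lra.
rewrite indicE hw mulr1 lee_fin powRE// ler_expR -/u.
by apply: ler_wpM2l => //; lra.
Qed.

Lemma moment_le_levels p : 0 <= p ->
  (\int[P]_w (`|zeta w| `^ p)%:E <= (x0 `^ p)%:E +
    \sum_(k <oo) ((expR (p * (L + k%:R + 1)))%:E * P (level (L + k%:R))))%E.
Proof.
move=> p0.
pose f k w := (expR (p * (L + k%:R + 1)) * \1_(level (L + k%:R)) w)%:E.
have f0 k w : (0 <= f k w)%E by rewrite lee_fin mulr_ge0 ?expR_ge0.
have mf k : measurable_fun setT (f k).
  apply/measurable_EFinP/measurable_funM => //.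
  exact: measurable_indic (measurable_level _).
have mser : measurable_fun setT (fun w => \sum_(k <oo) f k w)%E.
  by have := @ge0_emeasurable_sum _ T R setT f xpredT (fun k w _ _ => f0 k w)
    (fun k _ => mf k).
apply: (le_trans (@ge0_le_integral _ _ _ P setT measurableT _
  (fun w => (x0 `^ p)%:E + \sum_(k <oo) f k w)%E _ (measurable_abs_powR p) _
  (fun w _ => abs_powR_le_levels p w p0))).
- by move=> w _; rewrite lee_fin powR_ge0.
- exact: emeasurable_funD (measurable_cst _) mser.
rewrite ge0_integralD//; last 2 first.
- by move=> w _; rewrite lee_fin powR_ge0.
- by move=> w _; exact: nneseries_ge0.
rewrite integral_cst// (_ : ((x0 `^ p)%:E * _)%E = (x0 `^ p)%:E); last first.
  by rewrite -[RHS]mule1; congr (_ * _)%E; exact: probability_setT.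
rewrite integral_nneseries//.
apply: leeD => //; rewrite le_eqVlt; apply/orP; left; apply/eqP.
apply: eq_eseriesr => k _; rewrite /f integral_scaled_indic ?expR_ge0//.
exact: measurable_level.
Qed.

Lemma moment_upper : exists B, 0 < B /\ forall p, 1 <= p -> p < b ->
  (\int[P]_w (`|zeta w| `^ p)%:E <= (B * (b - p) `^ (- (gamma + 1)))%:E)%E.
Proof.
pose C := 2 * expR b * (2 * gamma) `^ gamma * (2 + b).
have b0 : 0 < b by apply: lt_trans b1.
exists (x0 `^ b * b `^ (gamma + 1) + C); split.
  by rewrite addr_gt0 ?mulr_gt0 ?powR_gt0 ?expR_gt0 ?addr_gt0 ?mulr_gt0.
move=> p p1 pb; have p0 : 0 <= p by apply: le_trans p1.
have s0 : 0 < b - p by rewrite subr_gt0.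
apply: (le_trans (moment_le_levels p p0)); rewrite mulrDl EFinD; apply: leeD.
  (* x0^p <= x0^b <= x0^b (b / (b - p))^(gamma + 1) *)
  rewrite lee_fin powRN -mulrA; apply: (@le_trans _ _ (x0 `^ b)).
    exact/ler_powR/ltW.
  apply: ler_peMr; first exact: powR_ge0.
  rewrite ler_pdivlMr ?powR_gt0// mul1r.
  apply: ge0_ler_powR; rewrite ?nnegrE; try exact: ltW.
  - by rewrite addr_ge0 ?ler01// ltW.
  - by rewrite lerBlDr lerDl.
apply: lime_le.
  by apply: is_cvg_ereal_nneg_natsum => k _; rewrite mule_ge0 ?lee_fin ?expR_ge0.
apply: nearW => n; apply: (@le_trans _ _ (\sum_(0 <= k < n)
  (expR (p * (L + k%:R + 1)) *
   (2 * (expR (- b * (L + k%:R)) * (L + k%:R) `^ gamma)))%:E)%E).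
  apply: lee_sum => k _; rewrite EFinM; apply: lee_wpmul2l; first by rewrite lee_fin expR_ge0.
  have Lk : L <= L + k%:R by rewrite lerDl.
  by have [] := level_prob_bounds _ Lk.
rewrite sumEFin lee_fin; apply: sum_level_terms_le => //.
exact: lt_le_trans ltr01 L_ge1.
Qed.

Lemma sum_levels_le_moment p u N : 0 <= p ->
  (\sum_(0 <= k < N) ((expR (p * (u + k.+1%:R)) - expR (p * (u + k%:R)))%:E *
                      P (level (u + k.+1%:R))) <= \int[P]_w (`|zeta w| `^ p)%:E)%E.
Proof.
move=> p0; pose a k := expR (p * (u + k%:R)).
have a_nd k : a k <= a k.+1 by rewrite ler_expR ler_wpM2l// -natr1 lerD2l lerDl.
pose g k w := ((a k.+1 - a k) * \1_(level (u + k.+1%:R)) w)%:E.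
have g0 k w : (0 <= g k w)%E by rewrite lee_fin mulr_ge0// subr_ge0.
have mg k : measurable_fun setT (g k).
  apply/measurable_EFinP/measurable_funM => //.
  exact: measurable_indic (measurable_level _).
have sum_le w : setT w -> (\sum_(0 <= k < N) g k w <= (`|zeta w| `^ p)%:E)%E.
  move=> _; rewrite sumEFin lee_fin.
  apply: (@sum_increments_le _ a (fun k => \1_(level (u + k.+1%:R)) w)) => //.
    exact: expR_ge0.
  move=> k; rewrite indicE; case: (boolP (w \in _)) => hw; [right|left] => //.
  move: hw; rewrite inE /level /= => hw.
  have z0 : 0 < `|zeta w| by apply: lt_le_trans (expR_gt0 _) hw.
  by rewrite /a powRE// ler_expR ler_wpM2l// -ler_expR lnK ?posrE.
apply: le_trans (@ge0_le_integral _ _ _ P setT measurableT _ _ _ _ _ sum_le); last first.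
- exact: measurable_abs_powR.
- by apply: emeasurable_sum => k; exact: mg.
- by move=> w _; apply: sume_ge0 => k _; exact: g0.
rewrite ge0_integral_sum//; apply: lee_sum => k _.
rewrite integral_scaled_indic//; last exact: measurable_level.
by rewrite subr_ge0.
Qed.

Lemma layer_ge p u M : 1 <= p -> p < b -> L <= u ->
  1 <= (b - p) * u -> (b - p) * u <= M ->
  (((1 - expR (-1)) * expR (- M) * (b - p) `^ (- gamma))%:E <=
   (expR (p * u) - expR (p * (u - 1)))%:E * P (level u))%E.
Proof.
move=> p1 pb Lu su1 suM; have p0 : 0 <= p by apply: le_trans p1.
have [Pu _] := level_prob_bounds u Lu.
apply: le_trans (lee_wpmul2l _ Pu); last first.
  by rewrite lee_fin subr_ge0 ler_expR ler_wpM2l// lerBlDr lerDl.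
by rewrite -EFinM lee_fin level_term_ge// ltW.
Qed.

Lemma moment_lower : exists A, 0 < A /\ forall p, 1 <= p -> p < b ->
  ((A * (b - p) `^ (- (gamma + 1)))%:E <= \int[P]_w (`|zeta w| `^ p)%:E)%E.
Proof.
have e1 : expR (-1) < 1 :> R by rewrite expR_lt1 ltrN10.
exists ((1 - expR (-1)) * expR (- (b * (L + 2)))); split.
  by rewrite mulr_gt0 ?expR_gt0// subr_gt0.
move=> p p1 pb; have p0 : 0 <= p by apply: le_trans p1.
have s0 : 0 < b - p by rewrite subr_gt0.
set s := b - p in s0 *.
(* the N levels e^(L + N + k + 1), k < N, with N ~ 1 / s *)
set N := (Num.truncn s^-1).+1.
have sN1 : 1 < s * N%:R by rewrite -ltr_pdivrMl// mulr1; exact: truncnS_gt.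
have sN2 : s * N%:R <= 1 + s.
  have : N%:R <= s^-1 + 1 by rewrite -natr1 lerD2r truncn_le invr_ge0 ltW.
  by move/(ler_wpM2l (ltW s0)); rewrite mulrDr mulfV ?gt_eqF// mulr1.
apply: (le_trans _ (sum_levels_le_moment p (L + N%:R) N p0)).
apply: (@le_trans _ _ (\sum_(0 <= k < N)
  ((1 - expR (-1)) * expR (- (b * (L + 2))) * s `^ (- gamma))%:E)%E); last first.
  rewrite big_nat_cond [X in (_ <= X)%E]big_nat_cond; apply: lee_sum => k.
  rewrite andbT => /andP[_ kN].
  set v := L + N%:R + k.+1%:R.
  have -> : L + N%:R + k%:R = v - 1 by rewrite /v -natr1; ring.
  have L0 : 0 <= L by apply: le_trans L_ge1.
  have kN' : s * k.+1%:R <= s * N%:R by apply: ler_wpM2l; rewrite ?ler_nat// ltW.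
  have sb : s <= b - 1 by rewrite /s; lra.
  have sL : s * L <= (b - 1) * L by rewrite ler_wpM2r.
  have sL0 : 0 <= s * L by rewrite mulr_ge0// ltW.
  have sk0 : 0 <= s * k.+1%:R by rewrite mulr_ge0 ?ler0n// ltW.
  have N0 : 0 <= N%:R :> R by [].
  have k0 : 0 <= k.+1%:R :> R by [].
  by apply: layer_ge => //; rewrite ?/v -?/s; lra.
have hX : 0 <= (1 - expR (-1)) * expR (- (b * (L + 2))) * s `^ (- gamma).
  by rewrite !mulr_ge0 ?expR_ge0 ?powR_ge0// subr_ge0 ltW.
have hN : s^-1 <= N%:R by rewrite -[s^-1]mulr1 ler_pdivrMl// ltW.
rewrite sumEFin lee_fin sumr_const_nat subn0 -(mulr_natr _ N) powR_oppD1//.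
have := ler_wpM2l hX hN; lra.
Qed.

Lemma pnorm_comparable : exists c1 c2, [/\ 0 < c1, 0 < c2 &
  forall p, 1 <= p -> p < b ->
    ((c1 * psi b (gamma + 1) p)%:E <= pnorm P zeta p)%E /\
    (pnorm P zeta p <= (c2 * psi b (gamma + 1) p)%:E)%E].
Proof.
have [A [A0 lowA]] := moment_lower; have [B [B0 uppB]] := moment_upper.
have [c1 [c2 [c10 c20 cmp]]] := @powR_inv_comparable R b (gamma + 1) A B b1
  (addr_ge0 (ltW gamma0) ler01) A0 B0.
exists c1, c2; split=> // p p1 pb; rewrite pnormE.
move: (lowA p p1 pb) (uppB p p1 pb).
case: (\int[P]_w _)%E => [r| |] lo up; last 2 first.
- by move: up; rewrite leye_eq.
- by move: lo; rewrite leeNy_eq.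
rewrite poweR_EFin !lee_fin in lo up *.
by have /andP[] := cmp p r p1 pb lo up.
Qed.

End tail_moments.

Theorem mainTheorem2 (d : measure_display) (T : measurableType d)
  (R : realType) (P : probability T R) (zeta : {RV P >-> R})
  (b gamma x0 : R) (hb : 1 < b) (hg : 0 < gamma) (hx0 : expR 1 <= x0)
  (htail : forall x, x0 <= x ->
     tailfun P zeta x = (x `^ (- b) * ln x `^ gamma)%:E) :
  (exists c1 c2 : R, 0 < c1 /\ 0 < c2 /\
     forall p, 1 <= p -> p < b ->
       ((c1 * psi b (gamma + 1) p)%:E <= pnorm P zeta p)%E /\
       (pnorm P zeta p <= (c2 * psi b (gamma + 1) p)%:E)%E)
  /\ (GLSnorm P (psi b (gamma + 1)) b zeta < +oo)%E
  /\ GLSnorm P (psi b gamma) b zeta = +oo%E.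
Proof.
have [c1 [c2 [c10 c20 cmp]]] :=
  @pnorm_comparable d T R P zeta b gamma x0 hb hg hx0 htail.
split; first by exists c1, c2.
split.
- apply: (GLSnorm_lt_pinfty P zeta b (gamma + 1) c2) => p p1 pb.
  by case: (cmp p p1 pb).
- apply: (GLSnorm_eq_pinfty P zeta b gamma c1 hb c10) => p p1 pb.
  by case: (cmp p p1 pb).
Qed.
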